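(* Let $p\ge7$ be prime, let $L/K$ be a finite cyclic Galois extension of number fields, and let $\overline r:G_L\to\mathrm{PGL}_2(\mathbb{F}_p)$ be a continuous homomorphism with cyclotomic determinant. Then $\overline r$ extends to a homomorphism $\overline R:G_K\to\mathrm{PGL}_2(\mathbb{F}_p)$ (i.e. $\overline R|_{G_L}=\overline r$) if and only if $\overline r$ is compatible with $L/K$. Moreover, $\overline r$ admits such an extension $\overline R$ with cyclotomic determinant if and only if $\overline r$ is strongly compatible with $L/K$.
   Context: $G_K=\mathrm{Gal}(\overline{\mathbb{Q}}/K)$. Let $\overline\varepsilon_p^{\mathrm{pr}}:G_{\mathbb{Q}}\to\mathbb{F}_p^\times/\mathbb{F}_p^{\times2}$ be the mod-$p$ cyclotomic character composed with the quotient map; determinants on $\mathrm{PGL}_2(\mathbb{F}_p)$ take values in $\mathbb{F}_p^\times/\mathbb{F}_p^{\times2}$. A homomorphism $\overline\rho:G_L\to\mathrm{PGL}_2(\mathbb{F}_p)$ has cyclotomic determinant if $\det\overline\rho(\sigma)=\overline\varepsilon_p^{\mathrm{pr}}(\sigma)$ for all $\sigma$. For $K\subseteq L$, $\overline\rho$ is invariant with respect to $L/K$ if for every $\tau\in G_K$ there is $g_\tau\in\mathrm{PGL}_2(\mathbb{F}_p)$ with $\overline\rho(\tau\sigma\tau^{-1})=g_\tau\overline\rho(\sigma)g_\tau^{-1}$ for all $\sigma\in G_L$; strongly invariant if moreover the $g_\tau$ can be chosen with $\det g_\tau=\overline\varepsilon_p^{\mathrm{pr}}(\tau)$. It is (strongly)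 compatible with $L/K$ if it is (strongly) invariant with the $g_\tau$ additionally satisfying $\overline\rho(\tau^{d})=g_\tau^{d}$ for all $\tau\in G_K$, where $d=d_\tau$ is the least positive integer with $\tau^d\in G_L$. *)

From HB Require Import structures.
From mathcomp Require Import all_boot all_order all_algebra all_fingroup all_field.
Set Implicit Arguments. Unset Strict Implicit. Unset Printing Implicit Defensive.
Import GRing.Theory Num.Theory.
Local Open Scope ring_scope.

(* Qbar is modelled by algC (the algebraic closure of Q inside C).
   Elements of Gal(Qbar/Q) are modelled as functions algC -> algC that are
   bijective ring endomorphisms; subsets of algC are Prop-valued predicates. *)

Definition is_subfield (K : algC -> Prop) : Prop :=
  [/\ K 0 /\ K 1,
      (forall x y, K x -> K y -> K (x + y)),
      (forall x, K x -> K (- x)),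
      (forall x y, K x -> K y -> K (x * y)) &
      (forall x, K x -> x != 0 -> K x^-1)].

Definition number_field (K : algC -> Prop) : Prop :=
  is_subfield K /\
  exists (n : nat) (b : 'I_n -> algC), (forall i, K (b i)) /\
    forall x, K x -> exists c : 'I_n -> rat, x = \sum_(i < n) ratr (c i) * b i.

Definition absGal (K : algC -> Prop) (s : algC -> algC) : Prop :=
  [/\ bijective s,
      (forall x y, s (x + y) = s x + s y),
      (forall x y, s (x * y) = s x * s y),
      s 1 = 1 &
      (forall x, K x -> s x = x)].

Definition powf (t : algC -> algC) (d : nat) : algC -> algC :=
  iter d (fun f => t \o f) id.

Definition cyclic_galois_ext (K L : algC -> Prop) : Prop :=
  [/\ number_field K, number_field L,
      (forall x, K x -> L x),
      (* normal (separability is automatic in characteristic 0) *)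
      (forall t x, absGal K t -> L x -> L (t x)) &
      (exists2 t0, absGal K t0 &
         forall t, absGal K t -> exists k, forall x, L x -> t x = powf t0 k x)].

Definition scalGL (p : nat) : {set {'GL_2['F_p]}} :=
  [set g : {'GL_2['F_p]} | is_scalar_mx (GLval g)].

Definition PGL2 (p : nat) : finGroupType := coset_of (scalGL p).

(* sigma acts on the p-th roots of unity by z |-> z^k, i.e. the mod-p
   cyclotomic character of sigma is k mod p *)
Definition cyc_exp (p : nat) (s : algC -> algC) (k : nat) : Prop :=
  forall z : algC, p.-primitive_root z -> s z = z ^+ k.

(* det x = eps_p^pr(sigma) in F_p^x / (F_p^x)^2 *)
Definition det_is_cyc (p : nat) (x : PGL2 p) (s : algC -> algC) : Prop :=
  exists (g : {'GL_2['F_p]}) (k : nat) (c : 'F_p),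
    [/\ coset (scalGL p) g = x, cyc_exp p s k &
        \det (GLval g) = k%:R * c ^+ 2].

(* continuous homomorphism G_L -> PGL_2(F_p) (discrete target, Krull topology:
   the kernel contains the pointwise stabiliser of a finite set) *)
Definition is_hom (p : nat) (L : algC -> Prop) (r : (algC -> algC) -> PGL2 p) : Prop :=
  forall s t, absGal L s -> absGal L t -> r (s \o t) = (r s * r t)%g.

Definition is_cont (p : nat) (L : algC -> Prop) (r : (algC -> algC) -> PGL2 p) : Prop :=
  exists S : seq algC, forall s t, absGal L s -> absGal L t ->
    (forall x, x \in S -> s x = t x) -> r s = r t.

Definition cyclotomic_det (p : nat) (L : algC -> Prop)
    (r : (algC -> algC) -> PGL2 p) : Prop :=
  forall s, absGal L s -> det_is_cyc (r s) s.

Definition conj_by (p : nat) (L : algC -> Prop) (r : (algC -> algC) -> PGL2 p)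
    (t : algC -> algC) (g : PGL2 p) : Prop :=
  forall s s', absGal L s -> absGal L s' ->
    (forall x, s' (t x) = t (s x)) -> r s' = (g * r s * g^-1)%g.

Definition order_mod (L : algC -> Prop) (t : algC -> algC) (d : nat) : Prop :=
  [/\ (0 < d)%N, absGal L (powf t d) &
      forall d', (0 < d')%N -> (d' < d)%N -> ~ absGal L (powf t d')].

Definition power_cond (p : nat) (L : algC -> Prop) (r : (algC -> algC) -> PGL2 p)
    (t : algC -> algC) (g : PGL2 p) : Prop :=
  forall d, order_mod L t d -> r (powf t d) = (g ^+ d)%g.

Definition compatible (p : nat) (K L : algC -> Prop)
    (r : (algC -> algC) -> PGL2 p) : Prop :=
  forall t, absGal K t -> exists g : PGL2 p, conj_by L r t g /\ power_cond L r t g.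

Definition strongly_compatible (p : nat) (K L : algC -> Prop)
    (r : (algC -> algC) -> PGL2 p) : Prop :=
  forall t, absGal K t -> exists g : PGL2 p,
    [/\ conj_by L r t g, det_is_cyc g t & power_cond L r t g].

(* Gal(L/K) is cyclic, generated by the image of some t0 in G_K, so every
   t in G_K factors as t0^k s with s in G_L.  An extension R restricted to
   G_L shows that R(t) itself witnesses (strong) compatibility.  Conversely,
   given g compatible with t0, put R(t0^k s) := g^k r(s).  The power
   condition makes this independent of the factorisation, since
   r(t0^m) = g^m whenever t0^m lies in G_L; the conjugation condition makes
   R multiplicative; R is continuous because elements of G_K that agree on a
   basis of L have the same image in Gal(L/K); and det g = eps(t0) gives R a
   cyclotomic determinant. *)

From HB Require Import structures.
From mathcomp Require Import all_boot all_order all_algebra all_fingroup all_field.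
From Stdlib Require Import FunctionalExtensionality ClassicalEpsilon Classical.
Set Implicit Arguments. Unset Strict Implicit. Unset Printing Implicit Defensive.
Import GRing.Theory.

Section AbsGal.
Variable K : algC -> Prop.

Lemma absGalS (K' : algC -> Prop) s :
  (forall x, K' x -> K x) -> absGal K s -> absGal K' s.
Proof. by move=> sK'K [? ? ? ? fixK]; split => // x /sK'K /fixK. Qed.

Lemma absGal_of_fix (L : algC -> Prop) s :
  absGal K s -> (forall x, L x -> s x = x) -> absGal L s.
Proof. by case. Qed.

Lemma absGal_id : absGal K id.
Proof. by split => //; exists id. Qed.

Lemma absGal_comp s t : absGal K s -> absGal K t -> absGal K (s \o t).
Proof.
move=> [bs ads ms os fs] [bt adt mt ot ft]; split => /=.
- exact: bij_comp.
- by move=> x y; rewrite adt ads.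
- by move=> x y; rewrite mt ms.
- by rewrite ot os.
- by move=> x Kx; rewrite ft // fs.
Qed.

Lemma absGal_inv s si : absGal K s -> cancel s si -> cancel si s -> absGal K si.
Proof.
move=> [_ ads ms os fs] sK siK; split.
- by exists s.
- by move=> x y; apply: (can_inj sK); rewrite siK ads !siK.
- by move=> x y; apply: (can_inj sK); rewrite siK ms !siK.
- by apply: (can_inj sK); rewrite siK os.
- by move=> x Kx; apply: (can_inj sK); rewrite siK fs.
Qed.

Section RingMorphism.
Variable s : algC -> algC.
Hypothesis sK : absGal K s.
Local Open Scope ring_scope.

Lemma absGal0 : s 0 = 0.
Proof. by case: sK => _ sD _ _ _; apply: (@addrI _ (s 0)); rewrite -sD !addr0. Qed.

Lemma absGalN x : s (- x) = - s x.
Proof.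
by case: sK => _ sD _ _ _; apply: (@addrI _ (s x)); rewrite -sD !subrr absGal0.
Qed.

Lemma absGal_nat n : s n%:R = n%:R.
Proof.
case: sK => _ sD _ s1 _; elim: n => [|n IHn]; first exact: absGal0.
by rewrite -addn1 natrD sD IHn s1.
Qed.

Lemma absGal_int z : s z%:~R = z%:~R.
Proof. by case: z => n; rewrite ?NegzE ?rmorphN /= ?absGalN absGal_nat. Qed.

Lemma absGalV x : s x^-1 = (s x)^-1.
Proof.
case: sK => _ _ sM s1 _.
have [->|x0] := eqVneq x 0; first by rewrite invr0 absGal0 invr0.
have sxV : s x * s x^-1 = 1 by rewrite -sM mulfV.
have sx0 : s x != 0.
  by apply: contra_eq_neq sxV => ->; rewrite mul0r eq_sym oner_neq0.
by apply: (mulfI sx0); rewrite sxV mulfV.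
Qed.

Lemma absGal_rat q : s (ratr q) = ratr q.
Proof. by case: sK => _ _ sM _ _; rewrite /ratr sM absGalV !absGal_int. Qed.

Lemma absGalX x n : s (x ^+ n) = s x ^+ n.
Proof.
case: sK => _ _ sM s1 _.
by elim: n => [|n IHn]; rewrite ?expr0 // !exprS sM IHn.
Qed.

Lemma absGal_sum n (F : 'I_n -> algC) :
  s (\sum_(i < n) F i) = \sum_(i < n) s (F i).
Proof. by case: sK => _ sD _ _ _; exact: (big_morph s sD absGal0). Qed.

End RingMorphism.

Lemma powfD t a b x : powf t (a + b) x = powf t a (powf t b x).
Proof. by elim: a => //= a ->. Qed.

Lemma powfSr t k x : powf t k.+1 x = powf t k (t x).
Proof. by rewrite -addn1 powfD. Qed.

Lemma powfM t m n : powf t (m * n) = powf (powf t n) m.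
Proof.
elim: m => // m IHm; apply: functional_extensionality => x.
by rewrite mulSn powfD IHm.
Qed.

Lemma powf_can t ti k : cancel t ti -> cancel (powf t k) (powf ti k).
Proof. by move=> tK; elim: k => // k IHk x; rewrite powfSr /= tK IHk. Qed.

Lemma absGal_powf t k : absGal K t -> absGal K (powf t k).
Proof.
by move=> tK; elim: k => [|k IHk]; [exact: absGal_id | exact: absGal_comp].
Qed.

End AbsGal.

Lemma absGal_conj (K L : algC -> Prop) t ti u :
  absGal K t -> absGal K ti -> cancel ti t -> (forall x, L x -> L (ti x)) ->
  absGal L u -> absGal L (t \o u \o ti).
Proof.
move=> tK tiK tiK_t Lti uL.
have drop_fixed M s : absGal M s -> absGal (fun _ => False) s by apply: absGalS.
have tuti := absGal_comp (absGal_comp (drop_fixed _ _ tK) (drop_fixed _ _ uL))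
                         (drop_fixed _ _ tiK).
apply: absGal_of_fix tuti _.
by move=> x Lx /=; case: uL => _ _ _ _ ->; [exact: tiK_t | exact: Lti].
Qed.

Lemma ex_order_mod (L : algC -> Prop) t m :
  (0 < m)%N -> absGal L (powf t m) -> exists d, order_mod L t d.
Proof.
elim/ltn_ind: m => m IHm m_gt0 tmL.
have [[d [d_gt0 ltdm tdL]] | no_smaller] :=
  classic (exists d, [/\ (0 < d)%N, (d < m)%N & absGal L (powf t d)]).
  exact: IHm tdL.
by exists m; split=> // d d_gt0 ltdm tdL; apply: no_smaller; exists d.
Qed.

Lemma order_mod_dvd (K L : algC -> Prop) t d m :
  absGal K t -> order_mod L t d -> absGal L (powf t m) -> (d %| m)%N.
Proof.
move=> tK [d_gt0 tdL d_min] tmL; apply: contraT; rewrite /dvdn -lt0n => mod_gt0.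
have [_ _ _ _ tqd_fix] := absGal_powf (m %/ d) tdL.
have [_ _ _ _ tm_fix] := tmL.
case: (d_min _ mod_gt0 (ltn_pmod m d_gt0)).
apply: absGal_of_fix (absGal_powf _ tK) _ => x Lx.
by rewrite -[in LHS](tqd_fix x Lx) -powfM -powfD addnC -divn_eq tm_fix.
Qed.

Lemma number_field_agree (L : algC -> Prop) : number_field L ->
  exists S : seq algC, forall (K : algC -> Prop) s t, absGal K s -> absGal K t ->
    (forall x, x \in S -> s x = t x) -> forall x, L x -> s x = t x.
Proof.
move=> [_ [n [b [_ b_span]]]]; exists [seq b i | i <- enum 'I_n].
move=> K s t sK tK st_b x /b_span [c ->].
have [_ _ sM _ _] := sK; have [_ _ tM _ _] := tK.
rewrite (absGal_sum sK) (absGal_sum tK); apply: eq_bigr => i _.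
by rewrite sM tM (absGal_rat sK) (absGal_rat tK) st_b ?map_f ?mem_enum.
Qed.

Section Homomorphism.
Variables (p : nat) (K : algC -> Prop) (R : (algC -> algC) -> PGL2 p).
Hypothesis R_hom : is_hom K R.

Lemma is_hom_id : R id = 1%g.
Proof. by apply: (mulgI (R id)); rewrite mulg1 -R_hom //; exact: absGal_id. Qed.

Lemma is_hom_powf t k : absGal K t -> R (powf t k) = (R t ^+ k)%g.
Proof.
move=> tK; elim: k => [|k IHk]; first exact: is_hom_id.
by rewrite [powf _ _]/= R_hom ?IHk ?expgS //; exact: absGal_powf.
Qed.

End Homomorphism.

Section CyclotomicDeterminant.
Variable p : nat.

Lemma scalGL_norm (y : {'GL_2['F_p]}) : y \in ('N(scalGL p))%g.
Proof.
rewrite inE; apply/subsetP => z; rewrite mem_conjg !inE.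
case/is_scalar_mxP => a Ha; apply/is_scalar_mxP; exists a.
rewrite -(conjgKV y z); move: (z ^ y^-1)%g Ha => w Hw.
rewrite /conjg !GL_MxE Hw GL_VxE mul_scalar_mx -scalemxAr mulVmx ?GL_unitmx //.
by rewrite scalemx1; apply/matrixP => i j; rewrite !mxE.
Qed.

Lemma det_is_cyc1 : det_is_cyc (1%g : PGL2 p) id.
Proof.
exists 1%g, 1%N, 1%R; split => //; first by rewrite morph1.
by rewrite GL_1E det1 expr1n mulr1.
Qed.

Lemma det_is_cycM (K : algC -> Prop) (x y : PGL2 p) t s :
  absGal K t -> det_is_cyc x t -> det_is_cyc y s -> det_is_cyc (x * y)%g (t \o s).
Proof.
move=> tK [h [k [c [hx tk deth]]]] [h' [k' [c' [hy sk' deth']]]].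
exists (h * h')%g, (k * k')%N, (c * c')%R; split.
- by rewrite coset_morphM ?scalGL_norm // hx hy.
- by move=> z z_prim /=; rewrite sk' // (absGalX tK) tk // -exprM.
- by rewrite GL_MxE det_mulmx deth deth' natrM exprMn mulrACA.
Qed.

Lemma det_is_cycX (K : algC -> Prop) (x : PGL2 p) t k :
  absGal K t -> det_is_cyc x t -> det_is_cyc (x ^+ k)%g (powf t k).
Proof.
move=> tK xt; elim: k => [|k IHk]; first exact: det_is_cyc1.
by rewrite expgS; exact: det_is_cycM tK xt IHk.
Qed.

End CyclotomicDeterminant.

Section Extension.
Variables (p : nat) (K L : algC -> Prop) (r : (algC -> algC) -> PGL2 p).
Variables (t0 t0i : algC -> algC) (g : PGL2 p).
Hypothesis r_hom : is_hom L r.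
Hypothesis L_normal : forall t x, absGal K t -> L x -> L (t x).
Hypothesis t0K : absGal K t0.
Hypotheses (t0K_can : cancel t0 t0i) (t0iK_can : cancel t0i t0).
Hypothesis t0_gen :
  forall t, absGal K t -> exists k, forall x, L x -> t x = powf t0 k x.
Hypotheses (g_conj : conj_by L r t0 g) (g_pow : power_cond L r t0 g).

Lemma absGal_t0i : absGal K t0i.
Proof. exact: absGal_inv t0K t0K_can t0iK_can. Qed.

Lemma absGal_conj_powf j u :
  absGal L u -> absGal L (powf t0 j \o u \o powf t0i j).
Proof.
apply: absGal_conj (absGal_powf j t0K) (absGal_powf j absGal_t0i) _ _.
  exact: powf_can.
by move=> x; apply: L_normal; exact: absGal_powf absGal_t0i.
Qed.

Lemma absGal_factor_at t k :
  absGal K t -> (forall x, L x -> t x = powf t0 k x) ->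
  exists2 s, absGal L s & t = powf t0 k \o s.
Proof.
move=> tK t_eq; exists (powf t0i k \o t).
  apply: absGal_of_fix (absGal_comp (absGal_powf k absGal_t0i) tK) _ => x Lx /=.
  by rewrite t_eq // powf_can.
by apply: functional_extensionality => x /=; rewrite (powf_can k t0iK_can).
Qed.

Lemma absGal_factor t :
  absGal K t -> exists k, exists2 s, absGal L s & t = powf t0 k \o s.
Proof. by move=> tK; have [k /(absGal_factor_at tK)] := t0_gen tK; exists k. Qed.

Lemma r_powf_t0 m : absGal L (powf t0 m) -> r (powf t0 m) = (g ^+ m)%g.
Proof.
move=> t0mL; have [->|m_gt0] := posnP m; first by rewrite expg0 (is_hom_id r_hom).
have [d t0d] := ex_order_mod m_gt0 t0mL.
have [_ t0dL _] := t0d.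
have /dvdnP[q ->] := order_mod_dvd t0K t0d t0mL.
by rewrite powfM (is_hom_powf r_hom) // g_pow // -expgM mulnC.
Qed.

Lemma r_conj_powf j u : absGal L u ->
  r (powf t0 j \o u \o powf t0i j) = (g ^+ j * r u * (g ^+ j)^-1)%g.
Proof.
move=> uL; elim: j => [|j IHj]; first by rewrite expg0 mul1g invg1 mulg1.
have vL := absGal_conj_powf j uL.
have -> : powf t0 j.+1 \o u \o powf t0i j.+1 =
          t0 \o (powf t0 j \o u \o powf t0i j) \o t0i.
  by apply: functional_extensionality => x /=; rewrite -powfSr.
rewrite (g_conj vL (absGal_conj_powf 1 vL)) ?IHj; last first.
  by move=> x /=; rewrite t0K_can.
by rewrite expgS invMg !mulgA.
Qed.

Lemma r_shift a m s s' : absGal L s -> absGal L s' ->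
  powf t0 a \o s = powf t0 (a + m) \o s' ->
  (g ^+ a * r s)%g = (g ^+ (a + m) * r s')%g.
Proof.
move=> sL s'L eq_t.
have s_eq x : s x = powf t0 m (s' x).
  apply: (can_inj (powf_can a t0K_can)); rewrite -powfD.
  exact: (congr1 (fun f => f x) eq_t).
have [[s'i s'K_can s'iK_can] _ _ _ _] := s'L.
have t0mL : absGal L (powf t0 m).
  have -> : powf t0 m = s \o s'i.
    by apply: functional_extensionality => y /=; rewrite s_eq s'iK_can.
  exact: absGal_comp sL (absGal_inv s'L s'K_can s'iK_can).
have -> : s = powf t0 m \o s' by apply: functional_extensionality.
by rewrite r_hom // r_powf_t0 // expgD mulgA.
Qed.

Definition extension_rel t y :=
  exists k s, [/\ absGal L s, t = powf t0 k \o s & y = (g ^+ k * r s)%g].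

Lemma extension_rel_uniq t y y' :
  extension_rel t y -> extension_rel t y' -> y = y'.
Proof.
move=> [a [s [sL -> ->]]] [b [s' [s'L eq_t ->]]].
have [leab | /ltnW leba] := leqP a b.
  by rewrite -(subnKC leab); apply: r_shift; rewrite // subnKC.
by rewrite -(subnKC leba); symmetry; apply: r_shift; rewrite // subnKC.
Qed.

(* Outside G_K there is no factorisation and the value is arbitrary. *)
Definition extension t := epsilon (inhabits 1%g) (extension_rel t).

Lemma extensionE k s :
  absGal L s -> extension (powf t0 k \o s) = (g ^+ k * r s)%g.
Proof.
move=> sL; have rel : extension_rel (powf t0 k \o s) (g ^+ k * r s)%g.
  by exists k, s.
exact: extension_rel_uniq (epsilon_spec _ _ (ex_intro _ _ rel)) rel.
Qed.

Lemma extension_restrict s : absGal L s -> extension s = r s.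
Proof. by move=> sL; rewrite -[s]/(powf t0 0 \o s) extensionE // mul1g. Qed.

Lemma extension_hom : is_hom K extension.
Proof.
move=> t t' tK t'K.
have [k [s sL ->]] := absGal_factor tK.
have [k' [s' s'L ->]] := absGal_factor t'K.
pose u := powf t0i k' \o s \o powf t0 k'.
have uL : absGal L u.
  apply: absGal_conj (absGal_powf k' absGal_t0i) (absGal_powf k' t0K) _ _ sL.
    exact: powf_can.
  by move=> x; apply: L_normal; exact: absGal_powf.
have s_conj : s = powf t0 k' \o u \o powf t0i k'.
  by apply: functional_extensionality => x /=; rewrite !powf_can.
have -> : (powf t0 k \o s) \o (powf t0 k' \o s') = powf t0 (k + k') \o (u \o s').
  by apply: functional_extensionality => x /=; rewrite powfD powf_can.
rewrite extensionE; last exact: absGal_comp.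
rewrite (extensionE k sL) (extensionE k' s'L) (r_hom uL s'L).
have := r_conj_powf k' uL; rewrite -s_conj => ->.
by rewrite expgD !mulgA mulgKV.
Qed.

Lemma extension_cont : is_cont L r -> number_field L -> is_cont K extension.
Proof.
move=> [S0 r_cont] /number_field_agree [S1 agree].
exists (S0 ++ S1) => t t' tK t'K eq_tt'.
have [k [s sL t_eq]] := absGal_factor tK.
have t'_eq x : L x -> t' x = powf t0 k x.
  move=> Lx; rewrite -(agree _ _ _ tK t'K) // => [|y yS1].
    by rewrite t_eq /=; case: sL => _ _ _ _ ->.
  by apply: eq_tt'; rewrite mem_cat yS1 orbT.
have [s' s'L t'_fac] := absGal_factor_at t'K t'_eq.
rewrite t_eq t'_fac !extensionE //; congr (_ * _)%g.
apply: r_cont => // x xS0.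
have := congr1 (powf t0i k) (eq_tt' x _).
rewrite t_eq t'_fac /= !(powf_can k t0K_can).
by apply; rewrite mem_cat xS0.
Qed.

Lemma extension_det :
  cyclotomic_det L r -> det_is_cyc g t0 -> cyclotomic_det K extension.
Proof.
move=> r_det g_det t tK; have [k [s sL ->]] := absGal_factor tK.
rewrite extensionE //.
exact: det_is_cycM (absGal_powf k t0K) (det_is_cycX k t0K g_det) (r_det s sL).
Qed.

Lemma extension_spec : is_cont L r -> number_field L ->
  [/\ is_hom K extension, is_cont K extension &
      forall s, absGal L s -> extension s = r s].
Proof.
move=> r_cont L_nf; split; [exact: extension_hom | exact: extension_cont |].
exact: extension_restrict.
Qed.

End Extension.

Section Restriction.
Variables (p : nat) (K L : algC -> Prop) (r R : (algC -> algC) -> PGL2 p).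
Hypotheses (KL : forall x, K x -> L x) (R_hom : is_hom K R).
Hypothesis R_ext : forall s, absGal L s -> R s = r s.

Lemma conj_by_restrict t : absGal K t -> conj_by L r t (R t).
Proof.
move=> tK s s' sL s'L comm_ts.
have [sK s'K] := (absGalS KL sL, absGalS KL s'L).
have ts_comm : s' \o t = t \o s by apply: functional_extensionality.
have := R_hom s'K tK; rewrite ts_comm R_hom // => R_comm.
by rewrite -!R_ext // R_comm mulgK.
Qed.

Lemma power_cond_restrict t : absGal K t -> power_cond L r t (R t).
Proof. by move=> tK d [_ tdL _]; rewrite -R_ext // (is_hom_powf R_hom). Qed.

Lemma restriction_compatible : compatible K L r.
Proof.
move=> t tK; exists (R t).
by split; [apply: conj_by_restrict | apply: power_cond_restrict].
Qed.

Lemma restriction_strongly_compatible :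
  cyclotomic_det K R -> strongly_compatible K L r.
Proof.
move=> R_det t tK; exists (R t).
by split; [apply: conj_by_restrict | apply: R_det | apply: power_cond_restrict].
Qed.

End Restriction.

Theorem lemma1 (p : nat) (K L : algC -> Prop) (r : (algC -> algC) -> PGL2 p) :
  prime p -> (7 <= p)%N ->
  cyclic_galois_ext K L ->
  is_hom L r -> is_cont L r -> cyclotomic_det L r ->
  ((exists R : (algC -> algC) -> PGL2 p,
      [/\ is_hom K R, is_cont K R & forall s, absGal L s -> R s = r s])
   <-> compatible K L r)
  /\
  ((exists R : (algC -> algC) -> PGL2 p,
      [/\ is_hom K R, is_cont K R, cyclotomic_det K R &
          forall s, absGal L s -> R s = r s])
   <-> strongly_compatible K L r).
Proof.
move=> _ _ [_ L_nf KL L_normal [t0 t0K t0_gen]] r_hom r_cont r_det.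
have [[t0i t0K_can t0iK_can] _ _ _ _] := t0K.
have ext_spec g :=
  extension_spec (g := g) r_hom L_normal t0K t0K_can t0iK_can t0_gen.
split; split.
- by move=> [R [R_hom _ R_ext]]; exact: restriction_compatible KL R_hom R_ext.
- move=> /(_ t0 t0K) [g [g_conj g_pow]]; exists (extension L r t0 g).
  exact: ext_spec g_conj g_pow r_cont L_nf.
- move=> [R [R_hom _ R_det R_ext]].
  exact: restriction_strongly_compatible KL R_hom R_ext R_det.
- move=> /(_ t0 t0K) [g [g_conj g_det g_pow]]; exists (extension L r t0 g).
  have [R_hom R_cont R_ext] := ext_spec g g_conj g_pow r_cont L_nf.
  split=> //.
  exact: extension_det r_hom t0K t0K_can t0iK_can t0_gen g_pow r_det g_det.
Qed.
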